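(* For every $\lambda \in \Lambda^{\bullet}(n,r)$, the $\mathbb{C}$-linear span of $B^{\lambda}\setminus \beta^{\lambda}$ is an $\mathbf{S}_0(n,r)$-submodule of $P_\lambda$.
   Context: Let $n,r\ge 0$ be integers. $\Lambda(n,r)$ is the set of weak compositions $\lambda=(\lambda_1,\dots,\lambda_n)$ of $r$ (nonnegative integers summing to $r$), and $\Lambda^{\bullet}(n,r)\subseteq\Lambda(n,r)$ is the set of those $\lambda$ such that $\lambda_i=0$ implies $\lambda_j=0$ for all $j>i$. $M_n(r)$ is the set of $n\times n$ matrices with nonnegative integer entries summing to $r$; for $A=(a_{i,j})\in M_n(r)$, $\mathrm{ro}(A)$ and $\mathrm{co}(A)$ are its row-sum and column-sum vectors. $E_{a,b}$ denotes the $n\times n$ matrix unit, and $D_\lambda=\mathrm{diag}(\lambda_1,\dots,\lambda_n)$. $\mathbf{S}_0(n,r)=S_0(n,r)\otimes_{\mathbb Z}\mathbb{C}$, where $S_0(n,r)=S_q(n,r)\otimes_{\mathbb Z[q]}\mathbb Z[q]/(q)$ is the $0$-Schur algebra, i.e. the specialization at $q=0$ of the Dipper–James $q$-Schur algebra $S_q(n,r)=\mathrm{End}_{H_r(q)}(\bigoplus_{\lambda\in\Lambda(n,r)}x_\lambda H_r(q))$. It has the Jensen–Su standard basis $\{e_A: A\in M_n(r)\}$ with the following properties: - $e_Ae_B=0$ unless $\mathrm{co}(A)=\mathrm{ro}(B)$, in which case $e_Ae_B=e_C$ for a unique $C\in M_n(r)$. - With $k_\lambda:=e_{D_\lambda}$,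 one has $k_\lambda e_A=e_A$ if $\lambda=\mathrm{ro}(A)$ and $0$ otherwise, and $e_Ak_\lambda=e_A$ if $\lambda=\mathrm{co}(A)$ and $0$ otherwise. - For $1\le i\le n-1$, put $e_i=\sum_\lambda e_{D_\lambda-E_{i+1,i+1}+E_{i,i+1}}$ and $f_i=\sum_\lambda e_{D_\lambda-E_{i,i}+E_{i+1,i}}$, the sums running over the $\lambda$ for which these matrices have nonnegative entries. - If $\mathrm{ro}(A)=\lambda$ and $\lambda_{i+1}>0$, then $e_ie_A=e_{A+E_{i,p}-E_{i+1,p}}$, where $p$ is the largest $j$ with $a_{i+1,j}>0$. - If $\lambda_i>0$, then $f_ie_A=e_{A-E_{i,q}+E_{i+1,q}}$, where $q$ is the smallest $j$ with $a_{i,j}>0$. - $e_ie_A=0$ if $\lambda_{i+1}=0$, and $f_ie_A=0$ if $\lambda_i=0$. Construction of $P_\lambda$ (Jensen–Su–Yang). For a strong composition $\alpha=(\alpha_1,\dots,\alpha_s)$ of $n$, cut $\lambda$ into consecutive subsequences of lengths $\alpha_1,\dots,\alpha_s$. We call $\alpha$ maximal with respect to $\lambda$ if each subsequence is either $(0)$ or has neither first nor last entry equal to $0$; $\max(\lambda)$ is the set of such $\alpha$. For an $n\times n$ matrix $A$ and $1\le v\le s$, let $A(\alpha;v)$ be the matrix whose $i$-th column equals that of $A$ if $\alpha_1+\dots+\alpha_{v-1}<i\le \alpha_1+\dots+\alpha_v$, and is zero otherwise. A matrix is open if every $2\times 2$ submatrix has at least one zero on its diagonal (i.e. $a_{i,j}a_{i',j'}=0$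 for all $i<i'$, $j<j'$). $A$ is open on columns with respect to $\alpha$ if every $A(\alpha;v)$ is open. Let $B^{\lambda,\alpha}=\{e_A:\mathrm{co}(A)=\lambda,\ A \text{ open on columns w.r.t. }\alpha\}$ and $$B^\lambda=\{e_A:\mathrm{co}(A)=\lambda\}\setminus\bigcup_{\alpha\in\max(\lambda)\setminus\{(1,\dots,1)\}}B^{\lambda,\alpha}.$$ $P_\lambda$ is the $\mathbb{C}$-span of $B^\lambda$, with action: for $b\in\{e_i,f_i,k_\mu\}$ and $e_A\in B^\lambda$, $b\cdot e_A=e_B$ if $be_A=e_B$ in $S_0(n,r)$ and $e_B\in B^\lambda$, and $b\cdot e_A=0$ otherwise. This is an $\mathbf{S}_0(n,r)$-module, and it is projective indecomposable. A column block diagonal matrix is a matrix $A=(a_{i,j})$ with nonnegative integer entries such that $a_{i,j}>0$ implies $a_{i',s}=0$ for all $i'\le i$ and $s>j$. For $\lambda\in\Lambda^\bullet(n,r)$, $\mathrm{cb}(\lambda)$ is the set of $n\times n$ column block diagonal matrices $A$ with $\mathrm{co}(A)=\lambda$, and $\beta^\lambda=\{e_A:A\in\mathrm{cb}(\lambda)\}$; one has $\beta^\lambda\subseteq B^\lambda$. *)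

(* Conventions:
   rows/columns and the generator index are 0-based (paper's i = our i+1). *)
From mathcomp Require Import all_boot all_algebra complex.
From mathcomp Require Import Rstruct.
From mathcomp Require Import boolp.

Set Implicit Arguments.
Unset Strict Implicit.
Unset Printing Implicit Defensive.
Delimit Scope ring_scope with ring.

Definition CC : fieldType := (Rdefinitions.R[i])%C.

(* n x n matrices with nonnegative integer entries; every matrix in M_n(r)
   has entries <= r, so M_n(r) embeds in 'M['I_r.+1]_n. *)
Definition Mat (n r : nat) := 'M['I_r.+1]_n.

(* entries indexed by nat (0 outside the matrix) *)
Definition aN n r (A : Mat n r) (k l : nat) : nat :=
  match (insub k : option 'I_n), (insub l : option 'I_n) with
  | Some x, Some y => nat_of_ord (A x y)
  | _, _ => 0
  end.

Definition rowsum n r (A : Mat n r) (k : nat) : nat := \sum_(j < n) aN A k j.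
Definition colsum n r (A : Mat n r) (l : nat) : nat := \sum_(i < n) aN A i l.

Definition ro_eq n r (A : Mat n r) (mu : 'I_n -> nat) : Prop :=
  forall i : 'I_n, rowsum A i = mu i.
Definition co_eq n r (A : Mat n r) (mu : 'I_n -> nat) : Prop :=
  forall j : 'I_n, colsum A j = mu j.

Definition total n r (A : Mat n r) : nat := \sum_(i < n) \sum_(j < n) aN A i j.

Definition is_comp n r (lam : 'I_n -> nat) : Prop := \sum_(i < n) lam i = r.
Definition is_bullet n r (lam : 'I_n -> nat) : Prop :=
  is_comp r lam /\ forall i j : 'I_n, lam i = 0 -> i < j -> lam j = 0.

Definition lamN n (lam : 'I_n -> nat) (k : nat) : nat :=
  if (insub k : option 'I_n) is Some x then lam x else 0.

Definition strong_comp (n : nat) (alpha : seq nat) : Prop :=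
  all (fun a => 0 < a) alpha /\ sumn alpha = n.

(* start (0-based) and length of the v-th block (v 0-based) *)
Definition bstart (alpha : seq nat) (v : nat) : nat := sumn (take v alpha).
Definition blen (alpha : seq nat) (v : nat) : nat := nth 0 alpha v.

Definition is_max n (lam : 'I_n -> nat) (alpha : seq nat) : Prop :=
  strong_comp n alpha /\
  forall v, v < size alpha ->
    let s := bstart alpha v in let a := blen alpha v in
    (a = 1 /\ lamN lam s = 0) \/
    (lamN lam s <> 0 /\ lamN lam (s + a - 1) <> 0).

Definition open_mat (n : nat) (M : nat -> nat -> nat) : Prop :=
  forall i i' j j', i < i' < n -> j < j' < n -> M i j * M i' j' = 0.

Definition colblock n r (A : Mat n r) (alpha : seq nat) (v : nat) :
  nat -> nat -> nat :=
  fun k l => if (bstart alpha v <= l < bstart alpha v + blen alpha v)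
             then aN A k l else 0.

Definition open_on_cols n r (A : Mat n r) (alpha : seq nat) : Prop :=
  forall v, v < size alpha -> open_mat n (colblock A alpha v).

Definition inB n r (lam : 'I_n -> nat) (A : Mat n r) : Prop :=
  co_eq A lam /\
  ~ (exists alpha, is_max lam alpha /\ alpha <> nseq n 1 /\
                   open_on_cols A alpha).

Definition col_block_diag n r (A : Mat n r) : Prop :=
  forall i j, 0 < aN A i j -> forall i' s, i' <= i -> j < s -> aN A i' s = 0.
Definition in_cb n r (lam : 'I_n -> nat) (A : Mat n r) : Prop :=
  col_block_diag A /\ co_eq A lam.

(* A + c1 * E_{i1,p} - c2 * E_{i2,p}, with entries cast back into 'I_r.+1 *)
Definition move_unit n r (A : Mat n r) (ifrom ito p : nat) : Mat n r :=
  matrix_of_fun matrix_key (fun (x y : 'I_n) =>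
    inord (aN A x y + ((x == ito :> nat) && (y == p :> nat))
           - ((x == ifrom :> nat) && (y == p :> nat)))).

Definition last_pos n r (A : Mat n r) (k : nat) : nat :=
  \max_(j < n | 0 < aN A k j) (j : nat).
Definition first_pos n r (A : Mat n r) (k : nat) : nat :=
  \big[minn/n]_(j < n | 0 < aN A k j) (j : nat).

Inductive gen (n : nat) :=
  | GenE of nat
  | GenF of nat
  | GenK of ('I_n -> nat).

Definition valid_gen n r (b : gen n) : Prop :=
  match b with
  | GenE i => i.+1 < n
  | GenF i => i.+1 < n
  | GenK mu => is_comp r mu
  end.

(* the product b * e_A in S_0(n,r): Some B means e_B, None means 0 *)
Definition gen_mul n r (b : gen n) (A : Mat n r) : option (Mat n r) :=
  match b with
  | GenE i => if rowsum A i.+1 == 0 then None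
              else Some (move_unit A i.+1 i (last_pos A i.+1))
  | GenF i => if rowsum A i == 0 then None
              else Some (move_unit A i i.+1 (first_pos A i))
  | GenK mu => if `[< ro_eq A mu >] then Some A else None
  end.

(* Elements of P_lambda are C-valued functions on matrices supported on
   B^lambda (coordinates in the basis B^lambda). *)
Definition vec n r := {ffun Mat n r -> CC}.

Definition supported_on n r (S : Mat n r -> Prop) (w : vec n r) : Prop :=
  forall A, w A != 0%ring -> S A.

(* action of a generator on P_lambda, extended linearly:
   b . e_A = e_B if b e_A = e_B and e_B in B^lambda, 0 otherwise *)
Definition act n r (lam : 'I_n -> nat) (b : gen n) (w : vec n r) : vec n r :=
  [ffun B => if `[< inB lam B >]
             then (\sum_(A | `[< inB lam A >] && (gen_mul b A == Some B)) w A)%ring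
             else 0%ring].

Definition in_span_B_minus_beta n r (lam : 'I_n -> nat) (w : vec n r) : Prop :=
  supported_on (fun A => inB lam A /\ ~ in_cb lam A) w.

(* a subspace of P_lambda given by support condition is an S_0(n,r)-submodule
   iff it is stable under the generators e_i, f_i, k_mu *)
Definition is_submodule n r (lam : 'I_n -> nat) (W : vec n r -> Prop) : Prop :=
  (forall w, W w -> supported_on (inB lam) w) /\
  (W 0%ring) /\
  (forall (c : CC) w1 w2, W w1 -> W w2 -> W (c *: w1 + w2)%ring) /\
  (forall b w, valid_gen r b -> W w -> W (act lam b w)).

(* Since B^lambda \ beta^lambda is defined by a support condition, it suffices
   that a generator never maps a basis vector e_A with A not column block
   diagonal to some e_B with B column block diagonal.  k_mu fixes A.  e_i
   (resp. f_i) moves one unit up (resp. down) by one row inside the column p of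
   the last (resp. first) positive entry of the moved row.  If B were column
   block diagonal, its positive entry at the target position would force every
   positive entry of A other than the moved one to avoid the "north-east" and
   "south-west" regions of that position, and the extremal choice of p rules
   out the moved row itself; hence A would be column block diagonal too. *)

From mathcomp Require Import all_boot all_order all_algebra complex.
From mathcomp Require Import boolp zify.
Import Order.TTheory.

Set Implicit Arguments.
Unset Strict Implicit.
Unset Printing Implicit Defensive.

(* [col_block_diag A] is convertible to [col_block_diag_fun (aN A)]. *)
Definition col_block_diag_fun (a : nat -> nat -> nat) : Prop :=
  forall i j, 0 < a i j -> forall i' s, i' <= i -> j < s -> a i' s = 0.

Section ColBlockDiagFun.
Implicit Types a b : nat -> nat -> nat.

Lemma col_block_diag_fun_add a b c1 c2 :
  col_block_diag_fun b ->
  (forall x y, 0 < a x y -> 0 < b x y \/ x = c1 /\ y = c2) ->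
  (forall x s, x <= c1 -> c2 < s -> a x s = 0) ->
  (forall x y, c1 <= x -> y < c2 -> a x y = 0) ->
  col_block_diag_fun a.
Proof.
move=> Hb Hab Habove Hbelow x y Hxy x' s Hx' Hys.
apply/eqP; rewrite -leqn0 leqNgt; apply/negP => Hx's.
case: (Hab x y Hxy) => [bxy | [Ex Ey]].
  case: (Hab x' s Hx's) => [bx's | [Ex' Es]].
    by rewrite (Hb x y bxy x' s Hx' Hys) in bx's.
  by move: Hxy; rewrite Hbelow -?Ex' -?Es.
by move: Hx's; rewrite Habove -?Ex -?Ey.
Qed.

Lemma col_block_diag_fun_move a b f t p :
  col_block_diag_fun b -> 0 < b t p ->
  (forall x y, 0 < a x y -> 0 < b x y \/ x = f /\ y = p) ->
  (forall x s, t < x <= f -> p < s -> a x s = 0) ->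
  (forall x y, f <= x < t -> y < p -> a x y = 0) ->
  col_block_diag_fun a.
Proof.
move=> Hb Htp Hab Hup Hdown.
apply: (@col_block_diag_fun_add a b f p Hb Hab) => [x s Hxf Hps | x y Hfx Hyp].
  case: (leqP x t) => Hxt; last by rewrite Hup ?Hxt.
  apply/eqP; rewrite -leqn0 leqNgt; apply/negP => /Hab [bxs | [_ Es]].
    by rewrite (Hb t p Htp x s Hxt Hps) in bxs.
  by rewrite Es ltnn in Hps.
case: (ltnP x t) => Hxt; first by rewrite Hdown ?Hfx.
apply/eqP; rewrite -leqn0 leqNgt; apply/negP => /Hab [bxy | [_ Ey]].
  by move: Htp; rewrite (Hb x y bxy t p Hxt Hyp).
by rewrite Ey ltnn in Hyp.
Qed.

End ColBlockDiagFun.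

Section Matrices.
Variables n r : nat.
Implicit Types A : Mat n r.

Lemma aN_ord A (x y : 'I_n) : aN A x y = A x y.
Proof. by rewrite /aN !valK. Qed.

Lemma aN_gt0_ltn A k l : 0 < aN A k l -> k < n /\ l < n.
Proof.
rewrite /aN; case: (ltnP k n) => Hk; last by rewrite insubF // ltnNge Hk.
case: (ltnP l n) => Hl //.
by rewrite (insubT (fun k => k < n) Hk) insubF // ltnNge Hl.
Qed.

Lemma aN_leq A k l : aN A k l <= r.
Proof.
rewrite /aN; case: insub => [x|//]; case: insub => [y|//].
by rewrite -ltnS ltn_ord.
Qed.

Lemma aN_move_unit A f t p k l : k < n -> l < n ->
  aN (move_unit A f t p) k l =
  nat_of_ord (inord (aN A k l + ((k == t) && (l == p)) - ((k == f) && (l == p)))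
              : 'I_r.+1).
Proof.
move=> Hk Hl; rewrite -[k]/(val (Ordinal Hk)) -[l]/(val (Ordinal Hl)).
by rewrite aN_ord mxE.

Qed.

Lemma rowsum_neq0 A k : rowsum A k != 0 -> exists j : 'I_n, 0 < aN A k j.
Proof.
apply: contraNP => Hno; apply/eqP/big1 => j _.
by apply/eqP; rewrite -leqn0 leqNgt; apply/negP => Hj; apply: Hno; exists j.
Qed.

Lemma first_posP A k : rowsum A k != 0 ->
  [/\ first_pos A k < n, 0 < aN A k (first_pos A k) &
      forall j, j < first_pos A k -> aN A k j = 0].
Proof.
move=> /rowsum_neq0 [j0 Pj0].
rewrite /first_pos (bigmin_eq_arg n j0) //; last by move=> i _; exact: ltnW.
case: arg_minP => //= i Pi Hmin; split=> // j Hj.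
apply/eqP; rewrite -leqn0 leqNgt; apply/negP => Pj.
have [_ Hjn] := aN_gt0_ltn Pj.
have : i <= j := Hmin (Ordinal Hjn) Pj.
by rewrite leqNgt Hj.
Qed.

Lemma last_posP A k : rowsum A k != 0 ->
  [/\ last_pos A k < n, 0 < aN A k (last_pos A k) &
      forall j, last_pos A k < j -> aN A k j = 0].
Proof.
move=> /rowsum_neq0 [j0 Pj0].
rewrite /last_pos (bigmax_eq_arg 0 j0) //.
case: arg_maxP => //= i Pi Hmax; split=> // j Hj.
apply/eqP; rewrite -leqn0 leqNgt; apply/negP => Pj.
have [_ Hjn] := aN_gt0_ltn Pj.
have : j <= i := Hmax (Ordinal Hjn) Pj.
by rewrite leqNgt Hj.
Qed.

Lemma co_eq_entry_ltr (lam : 'I_n -> nat) A f t p :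
  is_comp r lam -> co_eq A lam -> t < n -> f != t -> 0 < aN A f p ->
  aN A t p < r.
Proof.
move=> Hcomp Hco Ht Hft Hfp; have [Hf Hp] := aN_gt0_ltn Hfp.
have Hlam : lam (Ordinal Hp) <= r by rewrite -Hcomp (bigD1 (Ordinal Hp)) ?leq_addr.
have := Hco (Ordinal Hp); rewrite /colsum /= (bigD1 (Ordinal Ht)) //=.
rewrite (bigD1 (Ordinal Hf)) /=; last by rewrite -(inj_eq val_inj) /=.
lia.
Qed.

Lemma move_unit_support A f t p : t < n -> f != t ->
  0 < aN A f p -> aN A t p < r ->
  0 < aN (move_unit A f t p) t p /\
  forall x y, 0 < aN A x y ->
    0 < aN (move_unit A f t p) x y \/ x = f /\ y = p.
Proof.
move=> Ht Hft Hfp Htp; have [Hf Hp] := aN_gt0_ltn Hfp; split.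
  by rewrite aN_move_unit // !eqxx eq_sym (negbTE Hft) subn0 inordK; lia.
move=> x y Hxy; have [Hx Hy] := aN_gt0_ltn Hxy.
case: (boolP ((x == f) && (y == p))) => [/andP[/eqP -> /eqP ->] | Hnf]; first by right.
left; rewrite aN_move_unit // (negbTE Hnf) subn0.
case: (boolP ((x == t) && (y == p))) => [/andP[/eqP -> /eqP ->] | _].
  by rewrite inordK; lia.
by rewrite addn0 inordK // ltnS aN_leq.
Qed.

End Matrices.

Lemma col_block_diag_gen_mul n r (lam : 'I_n -> nat) (b : gen n) (A B : Mat n r) :
  is_comp r lam -> co_eq A lam -> valid_gen r b -> gen_mul b A = Some B ->
  col_block_diag B -> col_block_diag A.
Proof.
move=> Hcomp HcoA; case: b => [i|i|mu] /= Hv.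
- case: ifPn => // /last_posP[_ Hpos Hlast] [<-] HcbB.
  have Hne : i.+1 != i by rewrite gtn_eqF.
  have [HBt Hsupp] := move_unit_support (ltnW Hv) Hne Hpos
    (co_eq_entry_ltr Hcomp HcoA (ltnW Hv) Hne Hpos).
  apply: (col_block_diag_fun_move HcbB HBt Hsupp) => [x s Hx Hs | x y Hx _].
    have -> : x = i.+1 by lia.
    exact: Hlast.
  lia.
- case: ifPn => // /first_posP[_ Hpos Hfirst] [<-] HcbB.
  have Hne : i != i.+1 by rewrite ltn_eqF.
  have [HBt Hsupp] := move_unit_support Hv Hne Hpos
    (co_eq_entry_ltr Hcomp HcoA Hv Hne Hpos).
  apply: (col_block_diag_fun_move HcbB HBt Hsupp) => [x s Hx _ | x y Hx Hy].
    lia.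
  have -> : x = i by lia.
  exact: Hfirst.
- by case: ifP => // _ [<-].
Qed.

Lemma supported_on_scale_add n r (S : Mat n r -> Prop) (c : CC) (w1 w2 : vec n r) :
  supported_on S w1 -> supported_on S w2 -> supported_on S (c *: w1 + w2)%R.
Proof.
move=> H1 H2 A; rewrite !ffunE.
have [/H1 HA _ //|/negPn/eqP ->] := boolP (w1 A != 0%R).
by rewrite GRing.scaler0 GRing.add0r => /H2.
Qed.

Lemma act_support n r (lam : 'I_n -> nat) (b : gen n) (w : vec n r) B :
  act lam b w B != 0%R ->
  inB lam B /\
  exists A, [/\ inB lam A, gen_mul b A = Some B & w A != 0%R].
Proof.
rewrite ffunE; case: ifP => [/asboolP HB Hne|]; last by rewrite eqxx.
split=> //; apply: contraNP Hne => Hno; apply/eqP/big1 => A /andP[/asboolP HA /eqP HAB].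
by apply/eqP/negbNE/negP => HwA; apply: Hno; exists A.
Qed.

Theorem mainTheorem1 (n r : nat) (lam : 'I_n -> nat) :
  is_bullet r lam ->
  is_submodule lam (@in_span_B_minus_beta n r lam).
Proof.
move=> [Hcomp _]; split; [|split; [|split]].
- by move=> w Hw A /Hw[].
- by move=> A; rewrite ffunE eqxx.
- by move=> c w1 w2; apply: supported_on_scale_add.
move=> b w Hvalid Hw B /act_support[HB [A [HA HAB /Hw[_ HncA]]]].
split=> // -[HcbB _]; apply: HncA; split; last exact: HA.1.
exact: col_block_diag_gen_mul Hcomp HA.1 Hvalid HAB HcbB.
Qed.
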